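(* Let $n\ge2$, $C>0$, $x\in\mathcal{K}_S$, and $\tilde{x}=x+\eta$ where $\eta$ has i.i.d. Laplace entries with mean $0$ and scale $b>0$ (density $\prod_i\frac{1}{2b}e^{-|\eta_i|/b}$). Let $f$ denote the probability density of $\pi_S(\tilde{x})$ with respect to the $(n-1)$-dimensional Lebesgue measure on the hyperplane $\mathcal{K}_S$. Then for every pair $(i,j)$ and every $y\in\mathcal{K}_S$ with $x_i\le x_j$ and $y_i\le y_j$, $$f(y)\ge f(\mathrm{sw}_{ij}(y)).$$
   Context: $\mathcal{K}_S=\{v\in\mathbb{R}^n:\sum_iv_i=C\}$ and $\pi_S$ is the Euclidean projection onto $\mathcal{K}_S$. $\mathrm{sw}_{ij}(y)$ is the vector obtained from $y$ by swapping its $i$-th and $j$-th entries. *)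

From HB Require Import structures.
From mathcomp Require Import all_boot all_order all_algebra.
From mathcomp Require Import all_classical all_reals all_analysis.
From mathcomp Require Import perm.
Set Implicit Arguments. Unset Strict Implicit. Unset Printing Implicit Defensive.
Import Order.TTheory GRing.Theory Num.Theory.
Local Open Scope ring_scope.

Section Defs.
Variable R : realType.

(* The n-dimensional Lebesgue integral (of nonnegative functions) on
   R^n = n.-tuple R, as the iterated one-dimensional Lebesgue integral
   (Tonelli). *)
Fixpoint leb_int (n : nat) : (n.-tuple R -> \bar R) -> \bar R :=
  match n return (n.-tuple R -> \bar R) -> \bar R with
  | 0 => fun g => g [tuple]
  | k.+1 => fun g =>
      (\int[@lebesgue_measure R]_t leb_int (fun v : k.-tuple R => g (cons_tuple t v)))%E
  end.

Definition vsum n (v : n.-tuple R) : R := \sum_(i < n) tnth v i.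

Definition KS n (C : R) : set (n.-tuple R) := [set v | vsum v = C].

Definition piS n (C : R) (v : n.-tuple R) : n.-tuple R :=
  [tuple tnth v i - (vsum v - C) / n%:R | i < n].

Definition vadd n (u v : n.-tuple R) : n.-tuple R :=
  [tuple tnth u i + tnth v i | i < n].

Definition sw n (i j : 'I_n) (y : n.-tuple R) : n.-tuple R :=
  [tuple tnth y (tperm i j k) | k < n].

Definition laplace_density n (b : R) (e : n.-tuple R) : R :=
  \prod_(i < n) ((2 * b)^-1 * expR (- `|tnth e i| / b)).

Definition hyp_param n (C : R) (y' : n.-1.-tuple R) : n.-tuple R :=
  [tuple (if (i : nat) == n.-1 then C - vsum y' else nth 0 y' i) | i < n].

(* integral over K_S w.r.t. the (n-1)-dimensional Lebesgue (surface)
   measure on K_S; the parametrization above has area factor sqrt n *)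
Definition hyp_int n (C : R) (g : n.-tuple R -> \bar R) : \bar R :=
  ((Num.sqrt (n%:R : R))%:E * leb_int (fun y' => g (hyp_param C y')))%E.

Definition is_density_projLaplace n (C b : R) (x : n.-tuple R)
    (f : n.-tuple R -> R) : Prop :=
  forall A : set (n.-tuple R), measurable A ->
    leb_int (fun e => ((\1_A (piS C (vadd x e)) : R)
                         * laplace_density b e)%:E)
    = hyp_int C (fun y => ((\1_A y : R) * f y)%:E).

Definition continuous_on_KS n (C : R) (f : n.-tuple R -> R) : Prop :=
  forall y, KS C y -> forall eps : R, 0 < eps -> exists2 delta : R, 0 < delta &
    forall z, KS C z -> (forall k, `|tnth z k - tnth y k| < delta) ->
      `|f z - f y| < eps.

End Defs.

(* Suppose f (sw y) > f y, where sw y = y + D (e_i - e_j) with D = y_j - y_i >= 0,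
   and compare the probabilities of two small neighbourhoods of y and sw y in
   K_S, the second being a translate of the first by a sum-zero vector.  Since
   pi_S commutes with such translations, the translation can be moved onto the
   Laplace noise; by translation invariance of Lebesgue measure the probability
   of the second neighbourhood becomes an integral, over the event of the first
   one, of a shifted Laplace density.  There the shifted density is pointwise
   smaller, because |e_i| + |e_j| <= |e_i + D| + |e_j - D| whenever
   e_j - e_i <= D, which holds on that event as x_i <= x_j.  Continuity of f
   turns this comparison of masses into f (sw y) <= f y. *)

From HB Require Import structures.
From mathcomp Require Import all_boot all_order all_algebra perm.
From mathcomp Require Import all_classical all_reals all_analysis.
From mathcomp Require Import lra ring.
Set Implicit Arguments. Unset Strict Implicit. Unset Printing Implicit Defensive.
Import Order.TTheory GRing.Theory Num.Theory.
Local Open Scope classical_set_scope.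
Local Open Scope ring_scope.

Section lebesgue_translation.
Variable R : realType.
Local Notation mu := (@lebesgue_measure R).

Lemma lebesgue_measure_shift (s : R) (A : set (measurableTypeR R)) :
  measurable A -> mu ((fun t => t + s) @^-1` A) = mu A.
Proof.
move=> mA.
have mshift : measurable_fun [set: measurableTypeR R]
    (fun t : measurableTypeR R => (t + s : measurableTypeR R)).
  by apply: measurable_realfun.measurable_funD => //; exact: measurable_cst.
(* This measure instance depends on [mshift], so inference cannot find it. *)
pose nu := measure_function_pushforward__canonical__measure_function_Measure mu mshift.
rewrite -[LHS]/(nu A); apply/esym/lebesgue_measure_unique => // _ [[a b]] _ <-.
rewrite /nu /= /pushforward.
have -> : (fun t : R => t + s) @^-1` `]a, b]%classic = `](a - s), (b - s)]%classic.
  by apply/seteqP; split => t /=; rewrite !in_itv /= => /andP[? ?]; apply/andP; split; lra.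
rewrite !lebesgue_measure_itv /= !lte_fin ltrD2r.
by case: ifP => // _; rewrite -!EFinD; congr EFin; lra.
Qed.
End lebesgue_translation.

Import HBNNSimple.

Section nnsfun_shift.
Variables (R : realType) (h : {nnsfun measurableTypeR R >-> R}) (s : R).

Definition shift_fun : measurableTypeR R -> R := fun t => h (t + s).

Lemma measurable_shift_fun : measurable_fun [set: measurableTypeR R] shift_fun.
Proof.
apply: (measurableT_comp (measurable_funPT h)).
by apply: measurable_realfun.measurable_funD => //; exact: measurable_cst.
Qed.
HB.instance Definition _ :=
  isMeasurableFun.Build _ _ _ _ shift_fun measurable_shift_fun.

Lemma finite_range_shift_fun : finite_set (range shift_fun).
Proof.
apply: sub_finite_set (@fimfunP _ _ h).
by move=> _ [t _ <-]; exists (t + s).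
Qed.
HB.instance Definition _ := FiniteImage.Build _ _ shift_fun finite_range_shift_fun.

Lemma shift_fun_ge0 t : 0 <= shift_fun t.
Proof. exact: fun_ge0. Qed.
HB.instance Definition _ := isNonNegFun.Build _ _ shift_fun shift_fun_ge0.

Definition nnsfun_shift : {nnsfun measurableTypeR R >-> R} := shift_fun.
End nnsfun_shift.

Section integralT.
Variable R : realType.
Local Notation mu := (@lebesgue_measure R).
Local Open Scope ereal_scope.

Lemma ge0_integral_shift (H : R -> \bar R) (s : R) : (forall t, 0 <= H t) ->
  \int[mu]_t H (t + s)%R = \int[mu]_t H t.
Proof.
have le_shift (G : R -> \bar R) (u : R) : (forall t, 0 <= G t) ->
    \int[mu]_t G (t + u)%R <= \int[mu]_t G t.
  move=> G0; rewrite !ge0_integralTE //.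
  apply: ge_ereal_sup => _ [h hG <-].
  apply: ereal_sup_ubound; exists (nnsfun_shift h (- u)).
    by move=> t /=; rewrite /shift_fun; have := hG (t - u)%R; rewrite subrK.
  rewrite /sintegral; apply: eq_fsbigr => r _; congr (_ * _).
  by apply: (lebesgue_measure_shift (- u)); exact: measurable_funPTI.
move=> H0; apply/le_anti/andP; split; first exact: le_shift.
have := @le_shift (fun t => H (t + s)%R) (- s)%R (fun t => H0 _).
by under eq_integral do rewrite subrK.
Qed.

(* No measurability is needed: on [setT] the integral of a nonnegative
   function is a supremum over the simple functions below it. *)
Lemma ge0_le_integralT (F G : R -> \bar R) : (forall t, 0 <= F t) ->
  (forall t, F t <= G t) -> \int[mu]_t F t <= \int[mu]_t G t.
Proof.
move=> F0 FG; have G0 t : 0 <= G t by apply: le_trans (FG t).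
rewrite !ge0_integralTE //; apply: ge_ereal_sup => _ [h hF <-].
by apply: ereal_sup_ubound; exists h => // t; exact: le_trans (FG t).
Qed.

Lemma le_integralT (F G : R -> \bar R) :
  (forall t, F t <= G t) -> \int[mu]_t F t <= \int[mu]_t G t.
Proof.
move=> FG; rewrite integralE [leRHS]integralE; apply: leeB.
  apply: ge0_le_integralT => t; first exact: funepos_ge0.
  by apply: (@funepos_le _ _ setT) => [x _|]; [exact: FG|exact: in_setT].
apply: ge0_le_integralT => t; first exact: funeneg_ge0.
by apply: (@funeneg_le _ _ setT) => [x _|]; [exact: FG|exact: in_setT].
Qed.

Lemma integral_itv_indic (a b M : R) : (a < b)%R ->
  \int[mu]_t (if (a < t < b)%R then M else 0%R)%:E = (M * (b - a))%:E.
Proof.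
move=> ab; transitivity (\int[mu]_(t in `]a, b[%classic) (cst M%:E) t).
  rewrite [RHS]integral_mkcond; apply: eq_integral => t _.
  by rewrite /patch /= mem_setE in_itv /=; case: ifP.
by rewrite integral_cst //= lebesgue_measure_itv /= lte_fin ab -EFinD -EFinM.
Qed.
End integralT.

Section iterated_integral.
Variable R : realType.
Local Open Scope ereal_scope.

Lemma leb_int_ge0 n (g : n.-tuple R -> \bar R) :
  (forall v, 0 <= g v) -> 0 <= leb_int g.
Proof.
elim: n g => [|n IH] g g0 /=; first exact: g0.
by apply: integral_ge0 => t _; apply: IH.
Qed.

Lemma leb_int_le n (g1 g2 : n.-tuple R -> \bar R) :
  (forall v, g1 v <= g2 v) -> leb_int g1 <= leb_int g2.
Proof.
elim: n g1 g2 => [|n IH] g1 g2 g12 /=; first exact: g12.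
by apply: le_integralT => t; apply: IH.
Qed.

Lemma vadd_cons n (t s0 : R) (v s : n.-tuple R) :
  vadd (cons_tuple t v) (cons_tuple s0 s) = cons_tuple (t + s0)%R (vadd v s).
Proof.
apply: eq_from_tnth => k; rewrite tnth_mktuple.
case: (unliftP ord0 k) => [k'|] ->; first by rewrite !tnthS tnth_mktuple.
by rewrite !tnth0.
Qed.

Lemma leb_int_shift n (s : n.-tuple R) (g : n.-tuple R -> \bar R) :
  (forall v, 0 <= g v) -> leb_int (fun e => g (vadd e s)) = leb_int g.
Proof.
elim: n s g => [|n IH] s g g0 /=; first by congr g; rewrite !tuple0.
case/tupleP: s => s0 s.
transitivity (\int[@lebesgue_measure R]_t
    leb_int (fun v => g (cons_tuple (t + s0)%R v))).
  apply: eq_integral => t _; rewrite -(IH s (fun v => g (cons_tuple (t + s0)%R v))) //.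
  by congr leb_int; apply: funext => v; rewrite vadd_cons.
by rewrite (@ge0_integral_shift _ (fun t => leb_int (fun v => g (cons_tuple t v))))
  // => t; apply: leb_int_ge0.
Qed.

Definition in_box m (c : nat -> R) (r : R) (v : m.-tuple R) : bool :=
  all (fun k => c k - r < nth 0 v k < c k + r)%R (iota 0 m).

Lemma in_box_cons m c r t (v : m.-tuple R) :
  in_box c r (cons_tuple t v) =
  (c 0 - r < t < c 0 + r)%R && in_box (fun k => c k.+1) r v.
Proof. by rewrite /in_box /= -[1%N]/(1 + 0)%N iotaDl all_map. Qed.

Lemma leb_int_box m (c : nat -> R) (r M : R) : (0 < r)%R ->
  leb_int (fun v : m.-tuple R => (if in_box c r v then M else 0)%:E)
  = (M * (2 * r) ^+ m)%:E.
Proof.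
elim: m c M => [|m IH] c M r0 /=; first by rewrite mulr1.
transitivity (\int[@lebesgue_measure R]_t
    (if (c 0 - r < t < c 0 + r)%R then M * (2 * r) ^+ m else 0)%:E).
  apply: eq_integral => t _.
  have -> : (fun v : m.-tuple R => (if in_box c r (cons_tuple t v) then M else 0)%:E)
    = (fun v => (if in_box (fun k => c k.+1) r v then
                 (if (c 0 - r < t < c 0 + r)%R then M else 0) else 0)%:E).
    by apply: funext => v; rewrite in_box_cons; case: (_ < t < _)%R; case: in_box.
  by rewrite IH //; case: ifP; rewrite ?mul0r.
by rewrite integral_itv_indic; [congr EFin; rewrite exprS; ring | lra].
Qed.
End iterated_integral.

Section hyperplane.
Variable R : realType.
Implicit Types (C D eta : R) (n : nat).

Lemma tnth_vadd n (u v : n.-tuple R) k : tnth (vadd u v) k = tnth u k + tnth v k.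
Proof. exact: tnth_mktuple. Qed.

Lemma tnth_piS n C (v : n.-tuple R) k :
  tnth (piS C v) k = tnth v k - (vsum v - C) / n%:R.
Proof. exact: tnth_mktuple. Qed.

Lemma tnth_sw n (i j : 'I_n) (y : n.-tuple R) k :
  tnth (sw i j y) k = tnth y (tperm i j k).
Proof. exact: tnth_mktuple. Qed.

Lemma tnth_hyp_param n C (y' : n.-1.-tuple R) (k : 'I_n) : (k < n.-1)%N ->
  tnth (hyp_param C y') k = nth 0 y' k.
Proof. by move=> kn; rewrite tnth_mktuple ltn_eqF. Qed.

Lemma vaddA n (u v w : n.-tuple R) : vadd u (vadd v w) = vadd (vadd u v) w.
Proof. by apply: eq_from_tnth => k; rewrite !tnth_vadd addrA. Qed.

Lemma vsum_vadd n (u v : n.-tuple R) : vsum (vadd u v) = vsum u + vsum v.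
Proof. by rewrite /vsum -big_split; apply: eq_bigr => k _; rewrite tnth_vadd. Qed.

Lemma KS_vadd n C (v d : n.-tuple R) : vsum d = 0 -> KS C v -> KS C (vadd v d).
Proof. by rewrite /KS /= vsum_vadd => -> ->; rewrite addr0. Qed.

Lemma piS_KS n C (v : n.-tuple R) : (0 < n)%N -> KS C (piS C v).
Proof.
move=> n0; rewrite /KS /= /vsum.
under eq_bigr do rewrite tnth_piS.
rewrite sumrB sumr_const card_ord -/(vsum v) -[_ *+ n]mulr_natr divfK; last first.
  by rewrite pnatr_eq0 -lt0n.
by rewrite opprB addrC subrK.
Qed.

Lemma piS_vadd n C (v d : n.-tuple R) :
  vsum d = 0 -> piS C (vadd v d) = vadd (piS C v) d.
Proof.
move=> d0; apply: eq_from_tnth => k.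
rewrite tnth_vadd !tnth_piS vsum_vadd d0 addr0 tnth_vadd; ring.
Qed.

Lemma hyp_param_KS n C (y' : n.-1.-tuple R) : (0 < n)%N -> KS C (hyp_param C y').
Proof.
case: n y' => // n y' _; rewrite /KS /= /vsum big_ord_recr /= tnth_mktuple eqxx.
rewrite (eq_bigr (tnth y')); first by rewrite addrC subrK.
by move=> k _; rewrite tnth_hyp_param /= ?(tnth_nth 0).
Qed.

Definition transfer n (i j : 'I_n) D : n.-tuple R :=
  [tuple if k == i then D else if k == j then - D else 0 | k < n].

Section transfer.
Variables (n : nat) (i j : 'I_n).
Hypothesis ij : i != j.

Lemma tnth_transfer D k :
  tnth (transfer i j D) k = if k == i then D else if k == j then - D else 0.
Proof. exact: tnth_mktuple. Qed.

Lemma tnth_transferN D k : tnth (transfer i j (- D)) k = - tnth (transfer i j D) k.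
Proof.
by rewrite !tnth_transfer; case: (k == i); case: (k == j); rewrite ?oppr0.
Qed.

Lemma tnth_transfer_l D : tnth (transfer i j D) i = D.
Proof. by rewrite tnth_transfer eqxx. Qed.

Lemma tnth_transfer_r D : tnth (transfer i j D) j = - D.
Proof. by rewrite tnth_transfer eq_sym (negbTE ij) eqxx. Qed.

Lemma tnth_transfer_other D k : k != i -> k != j -> tnth (transfer i j D) k = 0.
Proof. by move=> ki kj; rewrite tnth_transfer (negbTE ki) (negbTE kj). Qed.

Lemma norm_tnth_transfer D k : 0 <= D -> `|tnth (transfer i j D) k| <= D.
Proof.
by move=> D0; rewrite tnth_transfer; case: (k == i); case: (k == j);
  rewrite ?normrN ?normr0 ?ger0_norm.
Qed.

Lemma vsum_transfer D : vsum (transfer i j D) = 0.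
Proof.
rewrite /vsum (bigD1 i) //= (bigD1 j) 1?eq_sym //= big1.
  by rewrite tnth_transfer_l tnth_transfer_r addr0 subrr.
by move=> k /andP[ki kj]; rewrite tnth_transfer_other.
Qed.

Lemma sw_transfer (y : n.-tuple R) :
  sw i j y = vadd y (transfer i j (tnth y j - tnth y i)).
Proof.
apply: eq_from_tnth => k; rewrite tnth_sw tnth_vadd tnth_transfer.
case: tpermP => [->|->|/eqP ki /eqP kj]; first by rewrite eqxx; ring.
  by rewrite eq_sym (negbTE ij) eqxx; ring.
by rewrite (negbTE ki) (negbTE kj) addr0.
Qed.
End transfer.

(* On [KS] this is the image of an open box under the chart [hyp_param]. *)
Definition Acyl n eta (c : n.-tuple R) : set (n.-tuple R) :=
  [set z | forall k : 'I_n, (k < n.-1)%N -> tnth c k - eta < tnth z k < tnth c k + eta].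

Lemma measurable_Acyl n eta (c : n.-tuple R) : measurable (Acyl eta c).
Proof.
have -> : Acyl eta c = \bigcap_(k in [set: 'I_n])
    [set z : n.-tuple R | (k < n.-1)%N -> tnth c k - eta < tnth z k < tnth c k + eta].
  by apply/seteqP; split => z /= H k; [move=> _|]; apply: H.
apply: fin_bigcap_measurable; first exact: finite_finset.
move=> k _; case: (ltnP k n.-1) => kn.
  rewrite [X in measurable X](_ : _ = [set: n.-tuple R] `&`
      (@tnth _ R ^~ k) @^-1` `](tnth c k - eta), (tnth c k + eta)[%classic).
    by apply: measurable_tnth => //; exact: measurable_itv.
  by apply/seteqP; split => z /=; rewrite in_itv /=; [move/(_ isT)|case].
rewrite [X in measurable X](_ : _ = setT); first exact: measurableT.
by apply/seteqP; split => z //= _; rewrite ltnNge kn.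
Qed.

Lemma Acyl_vadd_transfer n (i j : 'I_n) eta D (c : n.-tuple R) : i != j ->
  Acyl eta (vadd c (transfer i j D))
  = (fun z => vadd z (transfer i j (- D))) @^-1` Acyl eta c.
Proof.
move=> ij; apply/seteqP; split => z /= H k /(H k);
  by rewrite !tnth_vadd tnth_transferN // => /andP[? ?]; apply/andP; split; lra.
Qed.

Lemma hyp_param_Acyl n C eta (c : n.-tuple R) (y' : n.-1.-tuple R) : (0 < n)%N ->
  (hyp_param C y' \in Acyl eta c) = in_box (fun k => nth 0 c k) eta y'.
Proof.
move=> n0; apply/idP/allP.
  move/set_mem => H k; rewrite mem_iota add0n => /andP[_ kn].
  have kn' : (k < n)%N by apply: leq_trans kn (leq_pred n).
  by have := H (Ordinal kn') kn; rewrite tnth_hyp_param // !(tnth_nth 0).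
move=> H; apply/mem_set => k kn.
by have := H k; rewrite mem_iota add0n kn tnth_hyp_param // !(tnth_nth 0); apply.
Qed.

(* On [KS] the last coordinate is determined by the others, so closeness in the
   first [n - 1] coordinates controls it too. *)
Lemma KS_Acyl_dist n C eta (c z : n.-tuple R) : (0 < n)%N -> 0 <= eta ->
  KS C c -> KS C z -> Acyl eta c z -> forall k, `|tnth z k - tnth c k| <= n%:R * eta.
Proof.
case: n c z => // n c z _ eta0 Kc Kz Az k.
have eta_le : eta <= n.+1%:R * eta by rewrite ler_peMl // ler1n.
have [->|kn] := eqVneq k ord_max; last first.
  apply: le_trans eta_le; rewrite ltW // ltr_distl.
  apply: Az; rewrite /= ltn_neqAle -ltnS ltn_ord andbT.
  by apply: contra kn => /eqP kn; apply/eqP/val_inj.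
have : \sum_(k < n.+1) (tnth z k - tnth c k) = 0.
  by rewrite sumrB -/(vsum z) -/(vsum c) Kz Kc subrr.
rewrite big_ord_recr /= => /eqP; rewrite addrC addr_eq0 => /eqP ->.
rewrite normrN; apply: le_trans (ler_norm_sum _ _ _) _.
apply: le_trans (_ : \sum_(k < n) eta <= _).
  by apply: ler_sum => l _; rewrite ltW // ltr_distl; apply: Az => /=.
by rewrite sumr_const card_ord -[eta *+ n]mulr_natl ler_wpM2r // ler_nat.
Qed.
End hyperplane.

Section laplace.
Variable R : realType.

(* [t |-> |p + t| + |q - t|] is convex and symmetric about [(q - p) / 2]. *)
Lemma le_normD_transfer (p q D : R) : 0 <= D -> q - p <= D ->
  `|p| + `|q| <= `|p + D| + `|q - D|.
Proof.
move=> D0 qpD.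
by case: (ger0P p) => ?; case: (ger0P q) => ?; case: (ger0P (p + D)) => ?;
  case: (ger0P (q - D)) => ?; lra.
Qed.

Lemma laplace_density_ge0 n (b : R) (e : n.-tuple R) :
  0 < b -> 0 <= laplace_density b e.
Proof.
move=> b0; apply: prodr_ge0 => k _.
by rewrite mulr_ge0 ?expR_ge0 // invr_ge0 mulr_ge0 // ltW.
Qed.

Lemma laplace_densityE n (b : R) (e : n.-tuple R) :
  laplace_density b e = (2 * b)^-1 ^+ n * expR (- (\sum_k `|tnth e k|) / b).
Proof.
rewrite /laplace_density big_split /= prodr_const card_ord -expR_sum.
by rewrite -sumrN mulr_suml.
Qed.

Lemma laplace_density_transfer_le n (i j : 'I_n) (b D : R) (e : n.-tuple R) :
  i != j -> 0 < b -> 0 <= D -> tnth e j - tnth e i <= D ->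
  laplace_density b (vadd e (transfer i j D)) <= laplace_density b e.
Proof.
move=> ij b0 D0 eD; have b2 : 0 <= (2 * b)^-1 by rewrite invr_ge0 mulr_ge0 // ltW.
rewrite !laplace_densityE ler_wpM2l ?exprn_ge0 //.
rewrite ler_expR !mulNr lerN2 ler_pM2r ?invr_gt0 //.
rewrite (bigD1 i) // (bigD1 j) 1?eq_sym //= [leRHS](bigD1 i) // (bigD1 j) 1?eq_sym //=.
rewrite !tnth_vadd tnth_transfer_l tnth_transfer_r // !addrA lerD //.
  by rewrite le_normD_transfer.
apply: ler_sum => k /andP[ki kj].
by rewrite tnth_vadd tnth_transfer_other // addr0.
Qed.
End laplace.

Section projected_laplace.
Variable R : realType.
Local Open Scope ereal_scope.

Definition projLaplace_mass n (C b : R) (x : n.-tuple R) (A : set (n.-tuple R)) :=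
  leb_int (fun e => ((\1_A (piS C (vadd x e)) : R) * laplace_density b e)%:E).

(* Translating [A] by [transfer i j D] does not increase its mass: the
   translation can be absorbed in the noise, after which the Laplace density
   only decreases on the event. *)
Lemma projLaplace_mass_transfer_le n (C b D : R) (x : n.-tuple R) (i j : 'I_n)
    (A : set (n.-tuple R)) :
  (0 < n)%N -> i != j -> (0 < b)%R -> (0 <= D)%R -> (tnth x i <= tnth x j)%R ->
  (forall z, KS C z -> A z -> tnth z j - tnth z i <= D)%R ->
  projLaplace_mass C b x ((fun z => vadd z (transfer i j (- D))) @^-1` A)
  <= projLaplace_mass C b x A.
Proof.
move=> n0 ij b0 D0 xij AD.
set t := transfer i j D; set t' := transfer i j (- D).
pose h e := ((\1_A (piS C (vadd x e)) : R) * laplace_density b (vadd e t))%:E.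
have -> : projLaplace_mass C b x ((fun z => vadd z t') @^-1` A)
    = leb_int (fun e => h (vadd e t')).
  congr leb_int; apply: funext => e; rewrite /h.
  have -> : vadd (vadd e t') t = e.
    by apply: eq_from_tnth => k; rewrite !tnth_vadd tnth_transferN // addrNK.
  by rewrite vaddA [piS C (vadd (vadd x e) t')]piS_vadd //; exact: vsum_transfer.
rewrite leb_int_shift => [|e]; last first.
  by rewrite lee_fin mulr_ge0 ?laplace_density_ge0 // indicE.
apply: leb_int_le => e; rewrite /h lee_fin indicE.
case: (boolP (_ \in A)) => [/set_mem Ae|_]; last by rewrite !mul0r.
rewrite !mul1r laplace_density_transfer_le //.
by have := AD _ (piS_KS C (vadd x e) n0) Ae; rewrite !tnth_piS !tnth_vadd; lra.
Qed.

Lemma hyp_int_le n (C : R) (g1 g2 : n.-tuple R -> \bar R) : (0 < n)%N ->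
  (forall z, KS C z -> g1 z <= g2 z) -> hyp_int C g1 <= hyp_int C g2.
Proof.
move=> n0 g12; rewrite /hyp_int lee_wpmul2l ?lee_fin ?sqrtr_ge0 //.
by apply: leb_int_le => v; apply/g12/hyp_param_KS.
Qed.

Lemma hyp_int_Acyl n (C eta M : R) (c : n.-tuple R) : (0 < n)%N -> (0 < eta)%R ->
  hyp_int C (fun z => ((\1_(Acyl eta c) z : R) * M)%:E)
  = (Num.sqrt (n%:R : R) * (M * (2 * eta) ^+ n.-1))%:E.
Proof.
move=> n0 eta0; rewrite /hyp_int EFinM -(@leb_int_box _ n.-1 (fun k => nth 0%R c k) eta M eta0).
congr (_ * _).
by congr leb_int; apply: funext => v; rewrite indicE hyp_param_Acyl //; case: in_box;
  rewrite ?mul1r ?mul0r.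
Qed.
End projected_laplace.

Section swap_density.
Variables (R : realType) (n : nat) (C b : R) (x : n.-tuple R) (f : n.-tuple R -> R).
Hypotheses (n0 : (0 < n)%N) (b0 : 0 < b).
Hypotheses (f_cont : continuous_on_KS C f) (f_dens : is_density_projLaplace C b x f).
Lemma mass_Acyl_le eta M (c : n.-tuple R) : 0 < eta ->
    (forall z, KS C z -> Acyl eta c z -> f z <= M) ->
  (projLaplace_mass C b x (Acyl eta c)
    <= (Num.sqrt n%:R * (M * (2 * eta) ^+ n.-1))%:E)%E.
Proof.
move=> eta0 fM; rewrite /projLaplace_mass f_dens; last exact: measurable_Acyl.
rewrite -(hyp_int_Acyl C M c n0 eta0); apply: hyp_int_le => // z Kz.
rewrite lee_fin !indicE; case: (boolP (z \in _)) => [/set_mem Az|_].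
  by rewrite !mul1r; exact: fM.
by rewrite !mul0r.
Qed.

Lemma mass_Acyl_ge eta M (c : n.-tuple R) : 0 < eta ->
    (forall z, KS C z -> Acyl eta c z -> M <= f z) ->
  ((Num.sqrt n%:R * (M * (2 * eta) ^+ n.-1))%:E
    <= projLaplace_mass C b x (Acyl eta c))%E.
Proof.
move=> eta0 fM; rewrite /projLaplace_mass f_dens; last exact: measurable_Acyl.
rewrite -(hyp_int_Acyl C M c n0 eta0); apply: hyp_int_le => // z Kz.
rewrite lee_fin !indicE; case: (boolP (z \in _)) => [/set_mem Az|_].
  by rewrite !mul1r; exact: fM.
by rewrite !mul0r.
Qed.

Variables (i j : 'I_n) (y : n.-tuple R).
Hypotheses (ij : i != j) (Ky : KS C y).
Hypotheses (xij : tnth x i <= tnth x j) (yij : tnth y i <= tnth y j).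

(* Compare the masses of two small slabs around [y] and [sw i j y], both moved
   by [transfer i j a] so that the first lies where [z_j - z_i <= y_j - y_i]. *)
Lemma density_sw_le_approx (eps : R) : 0 < eps -> f (sw i j y) - eps <= f y + eps.
Proof.
move=> eps0; set D := tnth y j - tnth y i; set t := transfer i j D.
have D0 : 0 <= D by rewrite subr_ge0.
have Kyt : KS C (vadd y t) by apply: KS_vadd Ky; exact: vsum_transfer.
have [d1 d10 f_near_y] := f_cont Ky eps0.
have [d2 d20 f_near_yt] := f_cont Kyt eps0.
set a := Num.min d1 d2 / 2.
have a0 : 0 < a by rewrite divr_gt0 // lt_min d10 d20.
have a2 : 2 * a = Num.min d1 d2 by rewrite /a mulrC divfK.
have ad1 : 2 * a <= d1 by rewrite a2 ge_min lexx.
have ad2 : 2 * a <= d2 by rewrite a2 ge_min lexx orbT.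
have nR0 : (0 : R) < n%:R by rewrite ltr0n.
set eta := a / (4 * n%:R).
have eta0 : 0 < eta by rewrite divr_gt0 // mulr_gt0.
have neta : n%:R * eta = a / 4 by rewrite /eta; field; rewrite gt_eqF.
set o := transfer i j a.
have close w z : KS C w -> KS C z -> Acyl eta (vadd w o) z ->
    forall k, `|tnth z k - tnth w k - tnth o k| <= a / 4.
  move=> Kw Kz Az k; rewrite -neta.
  have Kwo : KS C (vadd w o) by apply: KS_vadd Kw; exact: vsum_transfer.
  by have := KS_Acyl_dist n0 (ltW eta0) Kwo Kz Az k; rewrite tnth_vadd opprD addrA.
have near w z : KS C w -> KS C z -> Acyl eta (vadd w o) z ->
    forall k, `|tnth z k - tnth w k| < 2 * a.
  move=> Kw Kz Az k; have := close w z Kw Kz Az k.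
  have := @norm_tnth_transfer _ _ i j a k (ltW a0); rewrite -/o !ler_norml ltr_norml.
  by move=> /andP[? ?] /andP[? ?]; apply/andP; split; lra.
set A := Acyl eta (vadd y o); set A' := Acyl eta (vadd (vadd y t) o).
have A_ord z : KS C z -> A z -> tnth z j - tnth z i <= D.
  move=> Kz Az; have := close y z Ky Kz Az i; have := close y z Ky Kz Az j.
  by rewrite tnth_transfer_l // tnth_transfer_r // !ler_norml /D; lra.
have A'E : A' = (fun z => vadd z (transfer i j (- D))) @^-1` A.
  rewrite /A' /A -Acyl_vadd_transfer //; congr Acyl.
  by apply: eq_from_tnth => k; rewrite !tnth_vadd addrAC.
set V := (2 * eta) ^+ n.-1.
have V0 : 0 < V by rewrite exprn_gt0 // mulr_gt0.
have mass_A : (projLaplace_mass C b x A <= (Num.sqrt n%:R * ((f y + eps) * V))%:E)%E.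
  apply: mass_Acyl_le => // z Kz Az.
  have := f_near_y z Kz (fun k => lt_le_trans (near y z Ky Kz Az k) ad1).
  by rewrite ltr_norml => /andP[_ ?]; lra.
have mass_A' : ((Num.sqrt n%:R * ((f (sw i j y) - eps) * V))%:E
    <= projLaplace_mass C b x A')%E.
  apply: mass_Acyl_ge => // z Kz Az.
  have := f_near_yt z Kz (fun k => lt_le_trans (near _ z Kyt Kz Az k) ad2).
  by rewrite (sw_transfer ij) ltr_norml => /andP[? _]; lra.
have mass_le : (projLaplace_mass C b x A' <= projLaplace_mass C b x A)%E.
  by rewrite A'E; exact: projLaplace_mass_transfer_le.
have := le_trans mass_A' (le_trans mass_le mass_A).
by rewrite lee_fin ler_pM2l ?sqrtr_gt0 // ler_pM2r.
Qed.
End swap_density.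

Unset Implicit Arguments.
Set Strict Implicit.
Local Close Scope classical_set_scope.

Theorem lemma10 (R : realType) (n : nat) (C b : R) (x : n.-tuple R)
    (f : n.-tuple R -> R) :
  (2 <= n)%N -> 0 < C -> 0 < b -> KS C x ->
  continuous_on_KS C f ->
  is_density_projLaplace C b x f ->
  forall (i j : 'I_n) (y : n.-tuple R), KS C y ->
    tnth x i <= tnth x j -> tnth y i <= tnth y j ->
    f (sw i j y) <= f y.
Proof.
move=> n2 _ b0 _ f_cont f_dens i j y Ky xij yij.
have [<-|ij] := eqVneq i j.
  by rewrite [sw i i y](_ : _ = y) //; apply: eq_from_tnth => k; rewrite tnth_sw tperm1 perm1.
apply/ler_addgt0Pr => e e0.
have e20 : 0 < e / 2 by rewrite divr_gt0.
have := density_sw_le_approx (ltnW n2) b0 f_cont f_dens ij Ky xij yij e20.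
lra.
Qed.
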